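(* Let $p=\frac{2\ell}{2\ell-1}$ for some $\ell\in\mathbb{N}$. Then there exists a real number $C_p>1$ such that for every $\varepsilon\in(0,1)$ we have $$N_p^{\mathrm{disc}}(\varepsilon,d)\ \ge\ C_p^d\,(1+o(1))\qquad\text{as } d\to\infty,$$ i.e. there is a sequence $(r_d)_{d\ge1}$ (possibly depending on $\varepsilon$) with $r_d\to0$ and $N_p^{\mathrm{disc}}(\varepsilon,d)\ge C_p^d(1+r_d)$ for all $d$. In particular, the $L_p$-discrepancy suffers from the curse of dimensionality for all such $p$.
   Context: For a set $\mathcal{P}=\{\boldsymbol{x}_1,\dots,\boldsymbol{x}_N\}$ of $N$ points in $[0,1)^d$, the local discrepancy function is $\Delta_{\mathcal{P}}(\boldsymbol{t})=\frac{|\{k\in\{1,\dots,N\}:\boldsymbol{x}_k\in[\boldsymbol{0},\boldsymbol{t})\}|}{N}-t_1t_2\cdots t_d$ for $\boldsymbol{t}=(t_1,\dots,t_d)\in[0,1]^d$, where $[\boldsymbol{0},\boldsymbol{t})=[0,t_1)\times\cdots\times[0,t_d)$. For $p\in[1,\infty)$ the $L_p$-discrepancy is $L_{p,N}(\mathcal{P})=\left(\int_{[0,1]^d}|\Delta_{\mathcal{P}}(\boldsymbol{t})|^p\,d\boldsymbol{t}\right)^{1/p}$. The $N$-th minimal $L_p$-discrepancy is $\mathrm{disc}_p(N,d)=\min_{\mathcal{P}}L_{p,N}(\mathcal{P})$, the minimum over all $N$-element point sets in $[0,1)^d$, and the initial discrepancy is $\mathrm{disc}_p(0,d)=\left(\int_{[0,1]^d}(t_1\cdots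 t_d)^p\,d\boldsymbol{t}\right)^{1/p}=(p+1)^{-d/p}$. The inverse of the minimal $L_p$-discrepancy is $N_p^{\mathrm{disc}}(\varepsilon,d)=\min\{N\in\mathbb{N}:\mathrm{disc}_p(N,d)\le\varepsilon\,\mathrm{disc}_p(0,d)\}$ for $d\in\mathbb{N}$, $\varepsilon\in(0,1)$. *)

From Stdlib Require Import Reals.
From Coquelicot Require Import Coquelicot.
Open Scope R_scope.

(* x^p for x >= 0 and real p > 0, with the convention 0^p = 0
   (Stdlib's Rpower is only meaningful for positive bases). *)
Definition rpow (x p : R) : R := if Rle_dec x 0 then 0 else Rpower x p.

(* A point set of N points in dimension d: P k i = i-th coordinate of point k
   (only k < N, i < d matter). *)
Definition admissible (N d : nat) (P : nat -> nat -> R) : Prop :=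
  forall k i, (k < N)%nat -> (i < d)%nat -> 0 <= P k i < 1.

Fixpoint in_box (d : nat) (x t : nat -> R) : bool :=
  match d with
  | O => true
  | S d' => in_box d' x t &&
            (if Rle_dec 0 (x d') then (if Rlt_dec (x d') (t d') then true else false)
             else false)
  end.

Fixpoint count_box (N d : nat) (P : nat -> nat -> R) (t : nat -> R) : nat :=
  match N with
  | O => O
  | S N' => (count_box N' d P t + (if in_box d (P N') t then 1 else 0))%nat
  end.

Fixpoint prod_coord (d : nat) (t : nat -> R) : R :=
  match d with
  | O => 1
  | S d' => prod_coord d' t * t d'
  end.

Definition local_disc (N d : nat) (P : nat -> nat -> R) (t : nat -> R) : R :=
  INR (count_box N d P t) / INR N - prod_coord d t.

Definition upd (t : nat -> R) (j : nat) (s : R) : nat -> R :=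
  fun i => if Nat.eqb i j then s else t i.

(* integral over [0,1]^d, as an iterated (Riemann) integral, coordinate by coordinate *)
Fixpoint cube_int (d : nat) (f : (nat -> R) -> R) : R :=
  match d with
  | O => f (fun _ => 0)
  | S d' => RInt (fun s => cube_int d' (fun t => f (upd t d' s))) 0 1
  end.

Definition Lp_disc (p : R) (N d : nat) (P : nat -> nat -> R) : R :=
  rpow (cube_int d (fun t => rpow (Rabs (local_disc N d P t)) p)) (1 / p).

Definition disc_min (p : R) (N d : nat) : Rbar :=
  Glb_Rbar (fun x => exists P, admissible N d P /\ x = Lp_disc p N d P).

(* inverse of the minimal L_p-discrepancy N_p^disc(eps,d)
   = min { N : disc_p(N,d) <= eps * disc_p(0,d) }  (as an Rbar; +oo if the set is empty) *)
Definition N_disc (p eps : R) (d : nat) : Rbar :=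
  Glb_Rbar (fun x => exists N : nat, x = INR N /\
              Rbar_le (disc_min p N d) (Rbar_mult (Finite eps) (disc_min p 0 d))).

(* For p >= 1, every count m <= N and every u in [0,1] satisfy
   |m/N - u|^p >= u^p - 2 N u^(p+1). Integrating this with u = t_1 ... t_d over the cube gives
   L_{p,N}(P)^p >= (p+1)^(-d) - 2 N (p+2)^(-d), while disc_p(0,d)^p = (p+1)^(-d).  Hence
   disc_p(N,d) <= eps disc_p(0,d) forces N >= (1 - eps^p)/2 ((p+2)/(p+1))^d.
   Since the cube integral is an iterated Riemann integral, the real work is integrability: every
   section of t |-> Phi(#points in [0,t), t_1 ... t_d) in its last variable is Lipschitz between
   consecutive coordinates of the points, hence piecewise continuous. *)

From Stdlib Require Import Reals Lra Lia List FunctionalExtensionality Bool.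
From Coquelicot Require Import Coquelicot.
Open Scope R_scope.

Lemma Rpower_1_l e : Rpower 1 e = 1.
Proof. unfold Rpower. rewrite ln_1, Rmult_0_r. apply exp_0. Qed.

Lemma Rpower_le_1 x e : 0 < x <= 1 -> 0 <= e -> Rpower x e <= 1.
Proof. intros. rewrite <- (Rpower_1_l e). apply Rle_Rpower_l; lra. Qed.

Lemma rpow_pos x q : 0 < x -> rpow x q = Rpower x q.
Proof. intros H. unfold rpow. destruct Rle_dec; lra. Qed.

Lemma rpow_nonpos x q : x <= 0 -> rpow x q = 0.
Proof. intros H. unfold rpow. destruct Rle_dec; lra. Qed.

Lemma rpow_ge0 x q : 0 <= rpow x q.
Proof. unfold rpow. destruct Rle_dec; [lra|]. left. apply exp_pos. Qed.

Lemma rpow_le_id x q : 0 <= x <= 1 -> 1 <= q -> rpow x q <= x.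
Proof.
  intros Hx Hq. destruct (Req_dec x 0) as [->|Hx0]; [rewrite rpow_nonpos; lra|].
  rewrite rpow_pos by lra. replace q with (1 + (q - 1)) by ring.
  rewrite Rpower_plus, Rpower_1 by lra.
  assert (Rpower x (q - 1) <= 1) by (apply Rpower_le_1; lra).
  assert (0 < Rpower x (q - 1)) by apply exp_pos. nra.
Qed.

Lemma rpow_le_compat x y q : x <= y -> 0 <= q -> rpow x q <= rpow y q.
Proof.
  intros Hxy Hq. destruct (Rle_dec x 0) as [Hx|Hx].
  - rewrite (rpow_nonpos x) by exact Hx. apply rpow_ge0.
  - rewrite !rpow_pos by lra. apply Rle_Rpower_l; lra.
Qed.

Lemma rpow_le_reg x y q : 0 < q -> 0 < y -> rpow x q <= rpow y q -> x <= y.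
Proof.
  intros Hq Hy Hle. destruct (Rle_dec x 0); [lra|].
  apply Rnot_lt_le. intros Hyx. rewrite !rpow_pos in Hle by lra.
  pose proof (Rlt_Rpower_l y x q Hq ltac:(lra)). lra.
Qed.

Lemma rpow_succ x q : 0 <= x -> rpow x (q + 1) = rpow x q * x.
Proof.
  intros Hx. destruct (Req_dec x 0) as [->|Hx0]; [rewrite !rpow_nonpos by lra; ring|].
  rewrite !rpow_pos by lra. rewrite Rpower_plus, Rpower_1 by lra. reflexivity.
Qed.

Lemma rpow_mult x y q : 0 <= x -> 0 <= y -> rpow (x * y) q = rpow x q * rpow y q.
Proof.
  intros Hx Hy. destruct (Req_dec x 0) as [->|Hx0].
  { rewrite Rmult_0_l, !(rpow_nonpos 0) by lra. ring. }
  destruct (Req_dec y 0) as [->|Hy0].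
  { rewrite Rmult_0_r, !(rpow_nonpos 0) by lra. ring. }
  assert (0 < x * y) by (apply Rmult_lt_0_compat; lra).
  rewrite !rpow_pos by lra. symmetry. apply Rpower_mult_distr; lra.
Qed.

Lemma rpow_inv_pow x q : 0 < x -> 0 < q -> rpow (Rpower x q) (1 / q) = x.
Proof.
  intros Hx Hq. rewrite rpow_pos by apply exp_pos.
  rewrite Rpower_mult. replace (q * (1 / q)) with 1 by (field; lra). apply Rpower_1; lra.
Qed.

Lemma rpow_sub_le x y q : 1 <= q -> 0 <= x <= y -> y <= 1 -> rpow y q - rpow x q <= q * (y - x).
Proof.
  intros Hq Hxy Hy. destruct (Req_dec x 0) as [->|Hx0].
  - rewrite (rpow_nonpos 0) by lra. pose proof (rpow_le_id y q ltac:(lra) Hq). nra.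
  - destruct (Req_dec x y) as [->|Hxy']; [lra|].
    rewrite !rpow_pos by lra.
    destruct (MVT_cor2 (fun z => Rpower z q) (fun z => q * Rpower z (q - 1)) x y)
      as [c [Hc Hcxy]]; [lra| |].
    { intros c Hc. apply derivable_pt_lim_power. lra. }
    rewrite Hc.
    assert (Rpower c (q - 1) <= 1) by (apply Rpower_le_1; lra).
    assert (0 <= q * (y - x) * (1 - Rpower c (q - 1))) by (apply Rmult_le_pos; nra). nra.
Qed.

Lemma rpow_lipschitz x y q : 1 <= q -> 0 <= x <= 1 -> 0 <= y <= 1 ->
  Rabs (rpow x q - rpow y q) <= q * Rabs (x - y).
Proof.
  intros Hq Hx Hy. destruct (Rle_dec x y).
  - pose proof (rpow_sub_le x y q Hq ltac:(lra) ltac:(lra)).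
    pose proof (rpow_le_compat x y q ltac:(lra) ltac:(lra)).
    rewrite !Rabs_left1 by lra. lra.
  - pose proof (rpow_sub_le y x q Hq ltac:(lra) ltac:(lra)).
    pose proof (rpow_le_compat y x q ltac:(lra) ltac:(lra)).
    rewrite !Rabs_right by lra. lra.
Qed.

Lemma rpow_derive_pos x q : 0 < x -> is_derive (fun y => rpow y q) x (q * Rpower x (q - 1)).
Proof.
  intros Hx. apply (is_derive_ext_loc (fun y => Rpower y q)).
  - apply filter_imp with (fun y => 0 < y); [|exact (open_gt 0 x Hx)].
    intros y Hy. symmetry. apply rpow_pos, Hy.
  - apply is_derive_Reals, derivable_pt_lim_power, Hx.
Qed.

Lemma rpow_succ_derive_0 a : 1 <= a -> is_derive (fun y => rpow y (a + 1)) 0 0.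
Proof.
  intros Ha. apply is_derive_Reals. intros eps Heps.
  exists (mkposreal _ (Rmin_pos 1 eps Rlt_0_1 Heps)). simpl. intros h Hh0 Hh.
  pose proof (Rmin_l 1 eps). pose proof (Rmin_r 1 eps).
  rewrite Rplus_0_l, (rpow_nonpos 0), Rminus_0_r, Rminus_0_r by lra.
  destruct (Rle_dec h 0) as [Hneg|Hpos].
  - rewrite rpow_nonpos, Rdiv_0_l, Rabs_R0 by exact Hneg. exact Heps.
  - rewrite Rabs_right in Hh by lra.
    rewrite rpow_succ by lra. replace (rpow h a * h / h) with (rpow h a) by (field; lra).
    pose proof (rpow_le_id h a ltac:(lra) Ha). rewrite Rabs_right by apply Rle_ge, rpow_ge0. lra.
Qed.

Lemma rpow_succ_derive a x : 1 <= a -> 0 <= x ->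
  is_derive (fun y => rpow y (a + 1)) x ((a + 1) * rpow x a).
Proof.
  intros Ha Hx. destruct (Req_dec x 0) as [->|Hx0].
  - rewrite (rpow_nonpos 0), Rmult_0_r by lra. apply rpow_succ_derive_0, Ha.
  - rewrite (rpow_pos x a) by lra. replace a with (a + 1 - 1) at 2 by ring.
    apply rpow_derive_pos. lra.
Qed.

Lemma rpow_continuous q x : 1 <= q -> 0 <= x -> continuous (fun y => rpow y q) x.
Proof.
  intros Hq Hx. destruct (Req_dec x 0) as [->|Hx0].
  - apply continuity_pt_filterlim. intros eps Heps. exists (Rmin 1 eps). split.
    { apply Rmin_pos; lra. }
    intros y [_ Hy]. simpl in Hy |- *. unfold Rdist in Hy |- *.
    pose proof (Rmin_l 1 eps). pose proof (Rmin_r 1 eps).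
    rewrite (rpow_nonpos 0), Rminus_0_r by lra. rewrite Rminus_0_r in Hy.
    rewrite Rabs_right by apply Rle_ge, rpow_ge0.
    destruct (Rle_dec y 0) as [Hneg|Hpos]; [rewrite rpow_nonpos; lra|].
    rewrite Rabs_right in Hy by lra. pose proof (rpow_le_id y q ltac:(lra) Hq). lra.
  - apply (ex_derive_continuous (K := R_AbsRing) (V := R_NormedModule)).
    eexists. apply rpow_derive_pos. lra.
Qed.

Lemma is_RInt_rpow a : 1 <= a -> is_RInt (fun s => rpow s a) 0 1 (/ (a + 1)).
Proof.
  intros Ha.
  replace (/ (a + 1)) with (minus (/ (a + 1) * rpow 1 (a + 1)) (/ (a + 1) * rpow 0 (a + 1))).
  - apply (is_RInt_derive (V := R_CompleteNormedModule) (fun y => / (a + 1) * rpow y (a + 1))).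
    + intros x Hx. rewrite Rmin_left, Rmax_right in Hx by lra.
      replace (rpow x a) with (/ (a + 1) * ((a + 1) * rpow x a)) by (field; lra).
      apply is_derive_scal, rpow_succ_derive; lra.
    + intros x Hx. rewrite Rmin_left, Rmax_right in Hx by lra. apply rpow_continuous; lra.
  - unfold minus, plus, opp; simpl.
    rewrite (rpow_nonpos 0), rpow_pos, Rpower_1_l by lra. ring.
Qed.

Definition in_cube (j : nat) (t : nat -> R) : Prop := forall i, (i < j)%nat -> 0 <= t i <= 1.

Lemma in_cube_0 j : in_cube j (fun _ => 0).
Proof. intros i _. lra. Qed.

Lemma in_cube_upd j t s : in_cube j t -> 0 <= s <= 1 -> in_cube (S j) (upd t j s).
Proof.
  intros Ht Hs i Hi. unfold upd. destruct (Nat.eqb_spec i j); [exact Hs|].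
  apply Ht. lia.
Qed.

Fixpoint cube_integrable (j : nat) (f : (nat -> R) -> R) : Prop :=
  match j with
  | O => True
  | S j' => (forall s, 0 <= s <= 1 -> cube_integrable j' (fun t => f (upd t j' s))) /\
            ex_RInt (fun s => cube_int j' (fun t => f (upd t j' s))) 0 1
  end.

Lemma cube_int_ext j f g : (forall t, in_cube j t -> f t = g t) -> cube_int j f = cube_int j g.
Proof.
  revert f g. induction j as [|j IH]; intros f g Hfg; simpl.
  - apply Hfg, in_cube_0.
  - apply RInt_ext. intros s Hs. rewrite Rmin_left, Rmax_right in Hs by lra.
    apply IH. intros t Ht. apply Hfg, in_cube_upd; [exact Ht|lra].
Qed.

Lemma RInt_of_is_RInt (f : R -> R) a b l : is_RInt f a b l -> RInt f a b = l.
Proof. apply (is_RInt_unique (V := R_CompleteNormedModule)). Qed.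

Lemma is_RInt_lincomb (f g : R -> R) a b u v : ex_RInt f u v -> ex_RInt g u v ->
  is_RInt (fun s => a * f s + b * g s) u v (a * RInt f u v + b * RInt g u v).
Proof.
  intros Hf Hg.
  apply (RInt_correct (V := R_CompleteNormedModule)), (is_RInt_scal _ _ _ a) in Hf.
  apply (RInt_correct (V := R_CompleteNormedModule)), (is_RInt_scal _ _ _ b) in Hg.
  exact (is_RInt_plus _ _ _ _ _ _ Hf Hg).
Qed.

Lemma cube_int_lincomb j f g a b : cube_integrable j f -> cube_integrable j g ->
  cube_integrable j (fun t => a * f t + b * g t) /\
  cube_int j (fun t => a * f t + b * g t) = a * cube_int j f + b * cube_int j g.
Proof.
  revert f g. induction j as [|j IH]; intros f g Hf Hg; simpl.
  - split; [exact I|reflexivity].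
  - destruct Hf as [Hf Hf_int], Hg as [Hg Hg_int].
    assert (Hsec :
      is_RInt (fun s => cube_int j (fun t => a * f (upd t j s) + b * g (upd t j s))) 0 1
        (a * cube_int (S j) f + b * cube_int (S j) g)).
    { eapply is_RInt_ext; [|exact (is_RInt_lincomb _ _ a b 0 1 Hf_int Hg_int)].
      intros s Hs. rewrite Rmin_left, Rmax_right in Hs by lra.
      symmetry. apply IH; [apply Hf|apply Hg]; lra. }
    split; [split|].
    + intros s Hs. apply IH; [apply Hf|apply Hg]; exact Hs.
    + eexists. exact Hsec.
    + apply RInt_of_is_RInt, Hsec.
Qed.

Lemma cube_int_scal j f a : cube_integrable j f ->
  cube_int j (fun t => a * f t) = a * cube_int j f.
Proof.
  intros Hf. destruct (cube_int_lincomb j f f a 0 Hf Hf) as [_ E].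
  rewrite Rmult_0_l, Rplus_0_r in E. rewrite <- E.
  apply cube_int_ext. intros t _. ring.
Qed.

Lemma cube_int_const j c : cube_integrable j (fun _ => c) /\ cube_int j (fun _ => c) = c.
Proof.
  induction j as [|j IH]; simpl; [split; [exact I|reflexivity]|].
  destruct IH as [Hc Ec]. rewrite Ec. split; [split|].
  - intros s _. exact Hc.
  - apply ex_RInt_const.
  - rewrite RInt_const. unfold scal; simpl; unfold mult; simpl. ring.
Qed.

Lemma cube_int_le j f g : cube_integrable j f -> cube_integrable j g ->
  (forall t, in_cube j t -> f t <= g t) -> cube_int j f <= cube_int j g.
Proof.
  revert f g. induction j as [|j IH]; intros f g Hf Hg Hfg; simpl.
  - apply Hfg, in_cube_0.
  - destruct Hf as [Hf Hf_int], Hg as [Hg Hg_int].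
    apply RInt_le; [lra|exact Hf_int|exact Hg_int|].
    intros s Hs. apply IH; [apply Hf; lra|apply Hg; lra|].
    intros t Ht. apply Hfg, in_cube_upd; [exact Ht|lra].
Qed.

Lemma cube_int_dist_le j f g e : cube_integrable j f -> cube_integrable j g ->
  (forall t, in_cube j t -> Rabs (f t - g t) <= e) -> Rabs (cube_int j f - cube_int j g) <= e.
Proof.
  intros Hf Hg Hfg.
  destruct (cube_int_const j e) as [He Ee].
  destruct (cube_int_lincomb j g (fun _ => e) 1 1 Hg He) as [Hge Ege].
  destruct (cube_int_lincomb j f (fun _ => e) 1 1 Hf He) as [Hfe Efe].
  assert (cube_int j f <= cube_int j (fun t => 1 * g t + 1 * e)).
  { apply cube_int_le; [exact Hf|exact Hge|].
    intros t Ht. specialize (Hfg t Ht). apply Rabs_le_between in Hfg. lra. }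
  assert (cube_int j g <= cube_int j (fun t => 1 * f t + 1 * e)).
  { apply cube_int_le; [exact Hg|exact Hfe|].
    intros t Ht. specialize (Hfg t Ht). apply Rabs_le_between in Hfg. lra. }
  apply Rabs_le_between. lra.
Qed.

Lemma lipschitz_continuous (g : R -> R) K : 0 <= K ->
  (forall x y, Rabs (g x - g y) <= K * Rabs (x - y)) -> forall z, continuous g z.
Proof.
  intros HK Hg z. apply continuity_pt_filterlim. intros eps Heps.
  exists (eps / (K + 1)). split; [apply Rdiv_lt_0_compat; lra|].
  intros x [_ Hx]. simpl in Hx |- *. unfold Rdist in Hx |- *.
  apply Rle_lt_trans with (K * (eps / (K + 1))).
  - eapply Rle_trans; [apply Hg|]. apply Rmult_le_compat_l; lra.
  - apply Rlt_le_trans with ((K + 1) * (eps / (K + 1))).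
    + apply Rmult_lt_compat_r; [apply Rdiv_lt_0_compat|]; lra.
    + right. field. lra.
Qed.

Lemma ex_RInt_piecewise_continuous (f : R -> R) (L : list R) a b : a <= b ->
  (forall a' b', a <= a' -> a' < b' -> b' <= b -> (forall c, In c L -> ~ a' < c < b') ->
     exists g : R -> R, (forall z, continuous g z) /\ forall z, a' < z < b' -> f z = g z) ->
  ex_RInt f a b.
Proof.
  revert a b. induction L as [|c L IH]; intros a b Hab Hpc.
  - destruct (Req_dec a b) as [<-|Hab']; [apply ex_RInt_point|].
    destruct (Hpc a b) as [g [Hg Hfg]]; [lra|lra|lra|intros c []|].
    apply (ex_RInt_ext g); [|apply (ex_RInt_continuous (V := R_CompleteNormedModule)); auto].
    intros z Hz. rewrite Rmin_left, Rmax_right in Hz by lra. symmetry. apply Hfg, Hz.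
  - assert (Hsub : forall u v, a <= u -> u <= v -> v <= b -> ~ u < c < v -> ex_RInt f u v).
    { intros u v Hau Huv Hvb Hc. apply IH; [exact Huv|].
      intros a' b' Ha' Hab' Hb' HL. apply Hpc; [lra|lra|lra|].
      intros c' [<-|Hc']; [lra|apply HL, Hc']. }
    destruct (Rlt_dec a c), (Rlt_dec c b); [apply ex_RInt_Chasles with c| | |];
      apply Hsub; lra.
Qed.

Lemma upd_eq t j s : upd t j s j = s.
Proof. unfold upd. rewrite Nat.eqb_refl. reflexivity. Qed.

Lemma upd_lt t j s i : (i < j)%nat -> upd t j s i = t i.
Proof. intros Hi. unfold upd. destruct (Nat.eqb_spec i j); [lia|reflexivity]. Qed.

Lemma prod_coord_ext d t t' : (forall i, (i < d)%nat -> t i = t' i) ->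
  prod_coord d t = prod_coord d t'.
Proof.
  induction d as [|d IH]; intros Htt'; simpl; [reflexivity|].
  rewrite IH by (intros i Hi; apply Htt'; lia). rewrite (Htt' d) by lia. reflexivity.
Qed.

Lemma prod_coord_upd j t s : prod_coord (S j) (upd t j s) = prod_coord j t * s.
Proof.
  simpl. rewrite upd_eq. f_equal. apply prod_coord_ext. intros i Hi. apply upd_lt, Hi.
Qed.

Lemma prod_coord_in_cube j t : in_cube j t -> 0 <= prod_coord j t <= 1.
Proof.
  induction j as [|j IH]; intros Ht; simpl; [lra|].
  assert (0 <= prod_coord j t <= 1) by (apply IH; intros i Hi; apply Ht; lia).
  assert (0 <= t j <= 1) by (apply Ht; lia). nra.
Qed.

Definition in_Ico0 (y s : R) : bool :=
  if Rle_dec 0 y then (if Rlt_dec y s then true else false) else false.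

Lemma in_box_S d x t : in_box (S d) x t = in_box d x t && in_Ico0 (x d) (t d).
Proof. reflexivity. Qed.

Lemma in_box_ext d x t t' : (forall i, (i < d)%nat -> t i = t' i) ->
  in_box d x t = in_box d x t'.
Proof.
  induction d as [|d IH]; intros Htt'; simpl; [reflexivity|].
  rewrite IH by (intros i Hi; apply Htt'; lia). rewrite (Htt' d) by lia. reflexivity.
Qed.

Lemma in_Ico0_const y z s a b : ~ a < y < b -> a < z < b -> a < s < b ->
  in_Ico0 y z = in_Ico0 y s.
Proof.
  intros Hy Hz Hs. unfold in_Ico0.
  destruct Rle_dec; [|reflexivity].
  destruct (Rlt_dec y z), (Rlt_dec y s); auto; exfalso; apply Hy; lra.
Qed.

Definition count_in_box (j : nat) (Q : list (nat -> R)) (t : nat -> R) : nat :=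
  length (filter (fun x => in_box j x t) Q).

Definition filter_coord (j : nat) (s : R) (Q : list (nat -> R)) : list (nat -> R) :=
  filter (fun x => in_Ico0 (x j) s) Q.

Lemma count_in_box_upd j Q t s :
  count_in_box (S j) Q (upd t j s) = count_in_box j (filter_coord j s Q) t.
Proof.
  unfold count_in_box, filter_coord. induction Q as [|x Q IH]; [reflexivity|].
  cbn [filter].
  rewrite in_box_S, upd_eq, (in_box_ext j x (upd t j s) t) by (intros; apply upd_lt; auto).
  destruct (in_Ico0 (x j) s).
  - rewrite andb_true_r. cbn [filter].
    destruct (in_box j x t); cbn [length]; rewrite IH; reflexivity.
  - rewrite andb_false_r. exact IH.
Qed.

Lemma count_in_box_le j Q t : (count_in_box j Q t <= length Q)%nat.
Proof. apply filter_length_le. Qed.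

Fixpoint point_list (N : nat) (P : nat -> nat -> R) : list (nat -> R) :=
  match N with O => nil | S N' => P N' :: point_list N' P end.

Lemma point_list_length N P : length (point_list N P) = N.
Proof. induction N as [|N IH]; simpl; congruence. Qed.

Lemma count_box_le N d P t : (count_box N d P t <= N)%nat.
Proof. induction N as [|N IH]; simpl; [lia|]. destruct (in_box d (P N) t); lia. Qed.

Lemma count_box_point_list N d P t : count_box N d P t = count_in_box d (point_list N P) t.
Proof.
  unfold count_in_box. induction N as [|N IH]; simpl; [reflexivity|].
  rewrite IH. destruct (in_box d (P N) t); simpl; lia.
Qed.

Definition count_lipschitz (L : R) (M : nat) (Phi : nat -> R -> R) : Prop :=
  forall m u v, (m <= M)%nat -> 0 <= u <= 1 -> 0 <= v <= 1 ->
    Rabs (Phi m u - Phi m v) <= L * Rabs (u - v).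

Definition count_prod_fun (j : nat) (Q : list (nat -> R)) (Phi : nat -> R -> R) :
  (nat -> R) -> R :=
  fun t => Phi (count_in_box j Q t) (prod_coord j t).

Lemma count_prod_fun_upd j Q Phi s :
  (fun t => count_prod_fun (S j) Q Phi (upd t j s)) =
  count_prod_fun j (filter_coord j s Q) (fun m u => Phi m (u * s)).
Proof.
  apply functional_extensionality. intros t. unfold count_prod_fun.
  rewrite count_in_box_upd, prod_coord_upd. reflexivity.
Qed.

Lemma count_lipschitz_scale L M M' Phi lam : 0 <= L -> count_lipschitz L M Phi ->
  0 <= lam <= 1 -> (M' <= M)%nat -> count_lipschitz L M' (fun m u => Phi m (u * lam)).
Proof.
  intros HL HPhi Hlam HM m u v Hm Hu Hv.
  eapply Rle_trans; [apply HPhi; [lia|nra|nra]|].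
  apply Rmult_le_compat_l; [exact HL|].
  rewrite <- Rmult_minus_distr_r, Rabs_mult, (Rabs_right lam) by lra.
  pose proof (Rabs_pos (u - v)). nra.
Qed.

Definition clamp01 (s : R) : R := Rmax 0 (Rmin 1 s).

Lemma clamp01_in s : 0 <= clamp01 s <= 1.
Proof. unfold clamp01, Rmax, Rmin. repeat destruct Rle_dec; lra. Qed.

Lemma clamp01_id s : 0 <= s <= 1 -> clamp01 s = s.
Proof. intros Hs. unfold clamp01, Rmax, Rmin. repeat destruct Rle_dec; lra. Qed.

Lemma clamp01_lipschitz x y : Rabs (clamp01 x - clamp01 y) <= Rabs (x - y).
Proof.
  unfold clamp01, Rmax, Rmin. repeat destruct Rle_dec; unfold Rabs; repeat destruct Rcase_abs; lra.
Qed.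

(* Clamping keeps the scale factor in [0,1], where [Phi] is Lipschitz, so that a section of the
   integrand extends to a Lipschitz function on all of R. *)
Lemma cube_int_count_prod_fun_lipschitz j Q Phi L : 0 <= L ->
  count_lipschitz L (length Q) Phi ->
  (forall s, 0 <= s <= 1 -> cube_integrable j (count_prod_fun j Q (fun m u => Phi m (u * s)))) ->
  forall x y,
    Rabs (cube_int j (count_prod_fun j Q (fun m u => Phi m (u * clamp01 x))) -
          cube_int j (count_prod_fun j Q (fun m u => Phi m (u * clamp01 y)))) <=
    L * Rabs (x - y).
Proof.
  intros HL HPhi Hint x y.
  apply cube_int_dist_le; [apply Hint, clamp01_in|apply Hint, clamp01_in|].
  intros t Ht. unfold count_prod_fun.
  pose proof (prod_coord_in_cube j t Ht). pose proof (clamp01_in x). pose proof (clamp01_in y).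
  eapply Rle_trans; [apply HPhi; [apply count_in_box_le|nra|nra]|].
  apply Rmult_le_compat_l; [exact HL|].
  rewrite <- Rmult_minus_distr_l, Rabs_mult, (Rabs_right (prod_coord j t)) by lra.
  pose proof (clamp01_lipschitz x y). pose proof (Rabs_pos (clamp01 x - clamp01 y)). nra.
Qed.

Lemma cube_integrable_count_prod_fun j : forall Q Phi L, 0 <= L ->
  count_lipschitz L (length Q) Phi -> cube_integrable j (count_prod_fun j Q Phi).
Proof.
  induction j as [|j IH]; intros Q Phi L HL HPhi; simpl; [exact I|].
  assert (Hsec : forall Q', (length Q' <= length Q)%nat -> forall s, 0 <= s <= 1 ->
            cube_integrable j (count_prod_fun j Q' (fun m u => Phi m (u * s)))).
  { intros Q' HQ' s Hs. apply (IH _ _ L HL), count_lipschitz_scale with (length Q); assumption. }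
  split.
  - intros s Hs. rewrite count_prod_fun_upd. apply Hsec; [apply filter_length_le|exact Hs].
  - apply (ex_RInt_piecewise_continuous _ (map (fun x => x j) Q)); [lra|].
    intros a b Ha Hab Hb Hgap.
    set (Q0 := filter_coord j ((a + b) / 2) Q).
    assert (HQ0 : (length Q0 <= length Q)%nat) by apply filter_length_le.
    exists (fun x => cube_int j (count_prod_fun j Q0 (fun m u => Phi m (u * clamp01 x)))). split.
    + apply (lipschitz_continuous _ L HL), cube_int_count_prod_fun_lipschitz; [exact HL| |].
      * intros m u v Hm. apply HPhi. lia.
      * apply Hsec, HQ0.
    + intros z Hz. rewrite count_prod_fun_upd, clamp01_id by lra. do 2 f_equal.
      apply filter_ext_in. intros x Hx. apply (in_Ico0_const _ _ _ a b); [|lra|lra].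
      apply Hgap, (in_map (fun y => y j)), Hx.
Qed.

Lemma cube_integrable_prod_coord_rpow j a : 1 <= a ->
  cube_integrable j (fun t => rpow (prod_coord j t) a).
Proof.
  intros Ha. apply (cube_integrable_count_prod_fun j nil (fun _ u => rpow u a) a); [lra|].
  intros m u v _ Hu Hv. apply rpow_lipschitz; assumption.
Qed.

Lemma cube_int_prod_coord_rpow j a : 1 <= a ->
  cube_int j (fun t => rpow (prod_coord j t) a) = (/ (a + 1)) ^ j.
Proof.
  intros Ha. induction j as [|j IH]; simpl.
  - rewrite rpow_pos by lra. apply Rpower_1_l.
  - rewrite (RInt_ext _ (fun s => (/ (a + 1)) ^ j * rpow s a)).
    + rewrite (RInt_of_is_RInt _ _ _ _ (is_RInt_scal _ _ _ _ _ (is_RInt_rpow a Ha))).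
      apply Rmult_comm.
    + intros s Hs. rewrite Rmin_left, Rmax_right in Hs by lra.
      rewrite <- IH, Rmult_comm, <- cube_int_scal by apply cube_integrable_prod_coord_rpow, Ha.
      apply cube_int_ext. intros t Ht.
      pose proof (prod_coord_in_cube j t Ht).
      change (rpow (prod_coord (S j) (upd t j s)) a = rpow s a * rpow (prod_coord j t) a).
      rewrite prod_coord_upd, rpow_mult by lra. apply Rmult_comm.
Qed.

Definition disc_power (p : R) (N m : nat) (u : R) : R := rpow (Rabs (INR m / INR N - u)) p.

Lemma local_disc_power N d P p :
  (fun t => rpow (Rabs (local_disc N d P t)) p) =
  count_prod_fun d (point_list N P) (disc_power p N).
Proof.
  apply functional_extensionality. intros t.
  unfold count_prod_fun, disc_power, local_disc. rewrite count_box_point_list. reflexivity.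
Qed.

(* For [N = 0] this holds because [INR m / 0 = 0] in Rocq. *)
Lemma ratio_in01 m N : (m <= N)%nat -> 0 <= INR m / INR N <= 1.
Proof.
  intros HmN. destruct N as [|N].
  - replace m with 0%nat by lia. simpl. unfold Rdiv. rewrite Rmult_0_l. lra.
  - assert (0 < INR (S N)) by apply lt_0_INR, Nat.lt_0_succ.
    pose proof (le_INR _ _ HmN). pose proof (pos_INR m).
    split; [apply Rdiv_le_0_compat; lra|]. apply (Rdiv_le_1 (INR m)); lra.
Qed.

Lemma disc_power_lipschitz p N : 1 <= p -> count_lipschitz p N (disc_power p N).
Proof.
  intros Hp m u v Hm Hu Hv. unfold disc_power. pose proof (ratio_in01 m N Hm).
  eapply Rle_trans; [apply rpow_lipschitz; [exact Hp| |]|].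
  1, 2: split; [apply Rabs_pos|apply Rabs_le_between; lra].
  apply Rmult_le_compat_l; [lra|].
  eapply Rle_trans; [apply Rabs_triang_inv2|]. right.
  replace (INR m / INR N - u - (INR m / INR N - v)) with (- (u - v)) by ring. apply Rabs_Ropp.
Qed.

Lemma cube_integrable_local_disc_power p N d P : 1 <= p ->
  cube_integrable d (fun t => rpow (Rabs (local_disc N d P t)) p).
Proof.
  intros Hp. rewrite local_disc_power.
  apply (cube_integrable_count_prod_fun d _ _ p); [lra|].
  rewrite point_list_length. apply disc_power_lipschitz, Hp.
Qed.

(* If [m > 0] and [2 N u <= 1], then [m/N - u >= u]; if [2 N u > 1], the left side is negative. *)
Lemma disc_power_ge p N m u : 1 <= p -> (m <= N)%nat -> 0 <= u <= 1 ->
  rpow u p - 2 * INR N * rpow u (p + 1) <= disc_power p N m u.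
Proof.
  intros Hp Hm Hu. unfold disc_power. rewrite rpow_succ by lra.
  pose proof (rpow_ge0 u p). pose proof (pos_INR N).
  assert (0 <= 2 * INR N * (rpow u p * u)) by (apply Rmult_le_pos; nra).
  destruct m as [|m].
  - rewrite Rdiv_0_l, Rminus_0_l, Rabs_Ropp, Rabs_right by lra. lra.
  - assert (HN1 : 1 <= INR N) by (apply (le_INR 1); lia).
    pose proof (rpow_ge0 (Rabs (INR (S m) / INR N - u)) p).
    destruct (Rle_dec (2 * INR N * u) 1) as [Hsmall|Hlarge]; [|nra].
    assert (2 * u <= INR (S m) / INR N).
    { apply Rmult_le_reg_r with (INR N); [lra|].
      replace (INR (S m) / INR N * INR N) with (INR (S m)) by (field; lra).
      pose proof (le_INR 1 (S m) ltac:(lia)). simpl in *. lra. }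
    rewrite Rabs_right by lra.
    pose proof (rpow_le_compat u (INR (S m) / INR N - u) p ltac:(lra) ltac:(lra)). lra.
Qed.

Lemma cube_int_local_disc_power_ge p N d P : 1 <= p ->
  (/ (p + 1)) ^ d - 2 * INR N * (/ (p + 2)) ^ d <=
  cube_int d (fun t => rpow (Rabs (local_disc N d P t)) p).
Proof.
  intros Hp.
  destruct (cube_int_lincomb d _ _ 1 (- (2 * INR N))
              (cube_integrable_prod_coord_rpow d p Hp)
              (cube_integrable_prod_coord_rpow d (p + 1) ltac:(lra))) as [Hint E].
  rewrite !cube_int_prod_coord_rpow in E by lra.
  replace (p + 1 + 1) with (p + 2) in E by ring.
  apply Rle_trans with (1 * (/ (p + 1)) ^ d + - (2 * INR N) * (/ (p + 2)) ^ d); [lra|].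
  rewrite <- E. apply cube_int_le; [exact Hint|apply cube_integrable_local_disc_power, Hp|].
  intros t Ht.
  change (rpow (Rabs (local_disc N d P t)) p)
    with (disc_power p N (count_box N d P t) (prod_coord d t)).
  replace (1 * _ + _) with (rpow (prod_coord d t) p - 2 * INR N * rpow (prod_coord d t) (p + 1))
    by ring.
  apply disc_power_ge; [exact Hp|apply count_box_le|apply prod_coord_in_cube, Ht].
Qed.

Lemma cube_int_local_disc_power_0 p d P : 1 <= p ->
  cube_int d (fun t => rpow (Rabs (local_disc 0 d P t)) p) = (/ (p + 1)) ^ d.
Proof.
  intros Hp. rewrite <- (cube_int_prod_coord_rpow d p Hp). apply cube_int_ext. intros t Ht.
  unfold local_disc. simpl count_box. rewrite Rdiv_0_l, Rminus_0_l, Rabs_Ropp.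
  pose proof (prod_coord_in_cube d t Ht). rewrite Rabs_right by lra. reflexivity.
Qed.

Lemma Glb_Rbar_ge (E : R -> Prop) m : (forall x, E x -> m <= x) -> Rbar_le m (Glb_Rbar E).
Proof. intros HE. apply (Glb_Rbar_correct E). intros x Hx. exact (HE x Hx). Qed.

Lemma Glb_Rbar_const (E : R -> Prop) v : E v -> (forall x, E x -> x = v) -> Glb_Rbar E = v.
Proof.
  intros Hv HE. apply Rbar_le_antisym.
  - apply (Glb_Rbar_correct E), Hv.
  - apply Glb_Rbar_ge. intros x Hx. rewrite (HE x Hx). apply Rle_refl.
Qed.

Lemma disc_min_0 p d : 1 <= p -> disc_min p 0 d = rpow ((/ (p + 1)) ^ d) (1 / p).
Proof.
  intros Hp. unfold disc_min, Lp_disc. apply Glb_Rbar_const.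
  - exists (fun _ _ => 0). split; [intros k i Hk; lia|].
    rewrite cube_int_local_disc_power_0 by exact Hp. reflexivity.
  - intros x [P [_ ->]]. rewrite cube_int_local_disc_power_0 by exact Hp. reflexivity.
Qed.

Lemma disc_min_ge p N d : 1 <= p ->
  Rbar_le (rpow ((/ (p + 1)) ^ d - 2 * INR N * (/ (p + 2)) ^ d) (1 / p)) (disc_min p N d).
Proof.
  intros Hp. apply Glb_Rbar_ge. intros x [P [_ ->]].
  apply rpow_le_compat; [apply cube_int_local_disc_power_ge, Hp|apply Rdiv_le_0_compat; lra].
Qed.

Lemma N_disc_ge p eps d : 1 <= p -> 0 < eps < 1 ->
  Rbar_le ((1 - Rpower eps p) / 2 * ((p + 2) / (p + 1)) ^ d) (N_disc p eps d).
Proof.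
  intros Hp Heps. apply Glb_Rbar_ge. intros x [N [-> HN]].
  rewrite disc_min_0 in HN by exact Hp.
  pose proof (Rbar_le_trans _ _ _ (disc_min_ge p N d Hp) HN) as Hle. simpl in Hle.
  set (A := (/ (p + 1)) ^ d) in *. set (B := (/ (p + 2)) ^ d) in *.
  assert (HA : 0 < A) by (apply pow_lt, Rinv_0_lt_compat; lra).
  assert (HB : 0 < B) by (apply pow_lt, Rinv_0_lt_compat; lra).
  assert (HAB : ((p + 2) / (p + 1)) ^ d * B = A).
  { unfold A, B. rewrite <- Rpow_mult_distr. f_equal. field. lra. }
  assert (Hep : 0 < Rpower eps p) by apply exp_pos.
  rewrite <- (rpow_inv_pow eps p), <- rpow_mult in Hle by lra.
  apply rpow_le_reg in Hle; [|apply Rdiv_lt_0_compat; lra|nra].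
  apply Rmult_le_reg_r with B; [exact HB|].
  replace ((1 - Rpower eps p) / 2 * ((p + 2) / (p + 1)) ^ d * B)
    with ((1 - Rpower eps p) / 2 * A) by (rewrite <- HAB; ring).
  lra.
Qed.

Lemma scaled_pow_ge_pow k C C0 : 0 < k -> 0 < C < C0 ->
  exists r : nat -> R, is_lim_seq r 0 /\ forall d, C ^ d * (1 + r d) <= k * C0 ^ d.
Proof.
  intros Hk HC. exists (fun d => - / k * (C / C0) ^ d). split.
  - replace (Finite 0) with (Rbar_mult (- / k) 0) by (simpl; f_equal; ring).
    apply is_lim_seq_scal_l, is_lim_seq_geom.
    rewrite Rabs_right; [apply (Rdiv_lt_1 C C0)|apply Rle_ge, Rdiv_le_0_compat]; lra.
  - intros d. assert (HC0d : 0 < C0 ^ d) by (apply pow_lt; lra).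
    assert (Hx : 0 <= (C / C0) ^ d) by (apply pow_le, Rdiv_le_0_compat; lra).
    replace (C ^ d) with ((C / C0) ^ d * C0 ^ d)
      by (rewrite <- Rpow_mult_distr; f_equal; field; lra).
    set (x := (C / C0) ^ d) in *.
    assert (x * (1 + - / k * x) <= k).
    { replace (x * (1 + - / k * x)) with (k / 4 - (x - k / 2) ^ 2 / k)
        by (field; apply Rgt_not_eq, Hk).
      assert (0 <= (x - k / 2) ^ 2 / k)
        by (apply Rdiv_le_0_compat; [apply pow2_ge_0|exact Hk]).
      lra. }
    nra.
Qed.

Theorem theorem1 (l : nat) (hl : (1 <= l)%nat) :
  let p := 2 * INR l / (2 * INR l - 1) in
  exists C : R, 1 < C /\
    forall eps : R, 0 < eps < 1 ->
      exists r : nat -> R, is_lim_seq r 0 /\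
        forall d : nat, (1 <= d)%nat ->
          Rbar_le (Finite (C ^ d * (1 + r d))) (N_disc p eps d).
Proof.
  intros p.
  assert (Hp : 1 <= p).
  { assert (1 <= INR l) by (apply (le_INR 1); exact hl).
    unfold p. apply Rle_div_r; lra. }
  set (C0 := (p + 2) / (p + 1)).
  assert (HC0 : 1 < C0) by (apply Rlt_div_r; lra).
  exists ((1 + C0) / 2). split; [lra|]. intros eps Heps.
  assert (Hk : 0 < (1 - Rpower eps p) / 2).
  { assert (Rpower eps p < 1) by (rewrite <- (Rpower_1_l p); apply Rlt_Rpower_l; lra). lra. }
  destruct (scaled_pow_ge_pow _ ((1 + C0) / 2) C0 Hk ltac:(lra)) as [r [Hr Hle]].
  exists r. split; [exact Hr|]. intros d _.
  eapply Rbar_le_trans; [|apply N_disc_ge; assumption]. apply Hle.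
Qed.
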